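(* Under the setting of the merge junction with link $I_1=[a_1,b_1]$ whose fundamental diagram satisfies (F), capacities $C_1,C_3>0$, split $\eta_1\in(0,1)$, cycle $\Delta_A>0$, fixed data $N_{ini},N_{up}$, and assuming no spillback ($S_3(t)\equiv C_3$), the Lax–Hopf solutions $N^{\Delta_A}$ and $N^0$ on $I_1$ with data $(N_{ini},N_{up},N^{\Delta_A}_{down})$ and $(N_{ini},N_{up},N^0_{down})$ satisfy, for all $(t,x)\in[0,T]\times[a_1,b_1]$, $$\big|N^{\Delta_A}(t,x)-N^0(t,x)\big|\le \eta_1(1-\eta_1)\Delta_A\min\{C_1,C_3\}\le\tfrac14\Delta_A\min\{C_1,C_3\}.$$
   Context: Assumption (F): $f:[0,\rho_j]\to[0,C]$ continuous and concave, $f(0)=f(\rho_j)=0$, $C=\max f$; $v=f'(0+)$, $-w=f'(\rho_j-)$ finite; $f^*(u)=\sup_{\rho\in[0,\rho_j]}\{f(\rho)-u\rho\}$, $u\in[-w,v]$. Lax–Hopf solution on $[a,b]$ with data $(N_{ini},N_{up},N_{down})$: with $\mathcal{C}(0,x)=N_{ini}(x)$, $\mathcal{C}(s,a)=N_{up}(s)$, $\mathcal{C}(s,b)=N_{down}(s)$ (minimum at corners), $\mathcal{C}=+\infty$ elsewhere, set $N(t,x)=\inf_{u\in[-w,v],\tau\ge0}\{\mathcal{C}(t-\tau,x-\tau u)+\tau f^*(u)\}$. Signal control: $u_1:[0,T]\to\{0,1\}$ is $\Delta_A$-periodic and, for some offset $\theta$, $u_1(t)=1$ iff $(t-\theta)\bmod\Delta_A\in[0,\eta_1\Delta_A)$.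 Effective supply: $\mathcal{S}_3^1(t)=\min\{C_1,S_3(t)\}$. Downstream data: $N^{\Delta_A}_{down}(t)=\int_0^t\mathcal{S}^1_3(\tau)u_1(\tau)\,d\tau$ (on-and-off model) and $N^0_{down}(t)=\int_0^t\eta_1\mathcal{S}^1_3(\tau)\,d\tau$ (continuum model). *)

From Stdlib Require Import Reals.
Open Scope R_scope.

Definition is_glb (E : R -> Prop) (m : R) : Prop :=
  (forall y, E y -> m <= y) /\ (forall m', (forall y, E y -> m' <= y) -> m' <= m).

Definition assumption_F (f : R -> R) (rhoj C v w : R) : Prop :=
  0 < rhoj /\
  (forall x, 0 <= x <= rhoj -> limit1_in f (fun y => 0 <= y <= rhoj) (f x) x) /\
  (forall x y l, 0 <= x <= rhoj -> 0 <= y <= rhoj -> 0 <= l <= 1 ->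
       l * f x + (1 - l) * f y <= f (l * x + (1 - l) * y)) /\
  f 0 = 0 /\ f rhoj = 0 /\
  (forall x, 0 <= x <= rhoj -> 0 <= f x <= C) /\
  (exists x, 0 <= x <= rhoj /\ f x = C) /\
  limit1_in (fun h => (f h - f 0) / h) (fun h => 0 < h <= rhoj) v 0 /\
  limit1_in (fun h => (f (rhoj + h) - f rhoj) / h) (fun h => - rhoj <= h < 0) (- w) 0.

Definition is_conjugate (f : R -> R) (rhoj v w : R) (fstar : R -> R) : Prop :=
  forall u, - w <= u <= v ->
    is_lub (fun y => exists rho, 0 <= rho <= rhoj /\ y = f rho - u * rho) (fstar u).

(* The set of values C(t - tau, x - tau u) + tau f*(u), u in [-w,v], tau >= 0,
   where the value condition C is N_ini on {0} x [a,b], N_up on [0,T] x {a},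
   N_down on [0,T] x {b} (+infinity elsewhere, i.e. no contribution); at the
   corners all applicable values are included, so the infimum takes the minimum. *)
Definition LH_set (fstar : R -> R) (v w a b : R)
    (Nini Nup Ndown : R -> R) (t x : R) (y : R) : Prop :=
  exists u tau, - w <= u <= v /\ 0 <= tau /\
    let s := t - tau in let z := x - tau * u in
    ((s = 0 /\ a <= z <= b /\ y = Nini z + tau * fstar u) \/
     (z = a /\ 0 <= s /\ y = Nup s + tau * fstar u) \/
     (z = b /\ 0 <= s /\ y = Ndown s + tau * fstar u)).

Definition LH_solution (fstar : R -> R) (v w a b T : R)
    (Nini Nup Ndown : R -> R) (N : R -> R -> R) : Prop :=
  forall t x, 0 <= t <= T -> a <= x <= b ->
    is_glb (LH_set fstar v w a b Nini Nup Ndown t x) (N t x).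

Definition rmod (y Delta : R) : R := Delta * frac_part (y / Delta).

Definition signal (eta Delta theta : R) (t : R) : R :=
  if Rlt_dec (rmod (t - theta) Delta) (eta * Delta) then 1 else 0.

From Stdlib Require Import Reals Lra Lia ZArith.
Open Scope R_scope.

(* Without spillback the effective supply is the constant c = min(C1, C3),
   so the two downstream boundary data are the integrals of c * u1 (on-and-off
   signal) and of eta * c (continuum model).  The cumulative green time [green_time] of the signal
      is written in closed form (eta D per completed cycle, plus
      min(elapsed time, eta D) in the current one).  Integrating cycle by
      cycle, the integral of c * u1 over [a, b] is c times the increment of
      [green_time]; since green_time x - eta (x - theta) stays in
      [0, eta (1 - eta) D], the two downstream data differ by at most
      eta (1 - eta) D c.
   2. Stability of Lax-Hopf solutions.  The Lax-Hopf formula is an infimum in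
      which the downstream datum enters additively, so perturbing that datum
      by at most K perturbs the solution by at most K. *)

Lemma RiemannInt_const_open (g : R -> R) (a b K : R) (pr : Riemann_integrable g a b) :
  a <= b -> (forall x, a < x < b -> g x = K) -> RiemannInt pr = K * (b - a).
Proof.
  intros Hab Hg.
  rewrite (RiemannInt_P18 pr (RiemannInt_P14 a b K)) by assumption.
  apply RiemannInt_P15.
Qed.

(* Cumulative green time of the signal of period D, green ratio eta and
   offset theta, counted from theta (negative before theta). *)
Definition green_time (eta D theta x : R) : R :=
  D * (eta * IZR (Int_part ((x - theta) / D)) + Rmin (frac_part ((x - theta) / D)) eta).

Section SignalCycles.
Variables (eta D theta : R).
Hypothesis HD : 0 < D.
Hypothesis Heta : 0 < eta < 1.

Lemma cycle_index_eq (x : R) (k : Z) :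
  theta + IZR k * D <= x < theta + (IZR k + 1) * D ->
  Int_part ((x - theta) / D) = k.
Proof.
  intros Hx. symmetry; apply Int_part_spec.
  assert (Hu : x - theta = (x - theta) / D * D) by (field; lra).
  set (u := (x - theta) / D) in *. split; nra.
Qed.

Lemma cycle_index_bounds (x : R) :
  theta + IZR (Int_part ((x - theta) / D)) * D <= x <
  theta + (IZR (Int_part ((x - theta) / D)) + 1) * D.
Proof.
  pose proof (base_Int_part ((x - theta) / D)) as [H1 H2].
  assert (Hu : x - theta = (x - theta) / D * D) by (field; lra).
  set (u := (x - theta) / D) in *. split; nra.
Qed.

(* On the closed k-th cycle, the green time is explicit (the right endpoint
   is consistent because a full cycle contributes exactly eta D). *)
Lemma green_time_on_cycle (x : R) (k : Z) :
  theta + IZR k * D <= x <= theta + (IZR k + 1) * D ->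
  green_time eta D theta x = D * eta * IZR k + Rmin (x - theta - IZR k * D) (eta * D).
Proof.
  intros [H1 H2]. unfold green_time, frac_part.
  destruct (Rle_lt_or_eq_dec _ _ H2) as [H3 | H3].
  - rewrite (cycle_index_eq x k (conj H1 H3)).
    assert (Hu : x - theta = (x - theta) / D * D) by (field; lra).
    set (u := (x - theta) / D) in *.
    unfold Rmin; destruct (Rle_dec _ _); destruct (Rle_dec _ _); nra.
  - assert (Hu : (x - theta) / D = IZR (k + 1)) by (rewrite H3, plus_IZR; field; lra).
    rewrite Hu, <- (Int_part_spec (IZR (k + 1)) (k + 1)) by lra.
    rewrite plus_IZR.
    unfold Rmin; destruct (Rle_dec _ _); destruct (Rle_dec _ _); nra.
Qed.

Lemma signal_on_cycle (x : R) (k : Z) :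
  theta + IZR k * D <= x < theta + (IZR k + 1) * D ->
  signal eta D theta x = if Rlt_dec (x - theta - IZR k * D) (eta * D) then 1 else 0.
Proof.
  intros Hx. unfold signal, rmod, frac_part.
  rewrite (cycle_index_eq x k Hx).
  replace (D * ((x - theta) / D - IZR k)) with (x - theta - IZR k * D) by (field; lra).
  reflexivity.
Qed.

(* The green time deviates from its average eta (x - theta) by at most
   eta (1 - eta) D, the maximum being reached at the end of a green phase. *)
Lemma green_time_deviation (x : R) :
  0 <= green_time eta D theta x - eta * (x - theta) <= eta * (1 - eta) * D.
Proof.
  unfold green_time.
  assert (Hu : x - theta = (x - theta) / D * D) by (field; lra).
  pose proof (base_fp ((x - theta) / D)) as [F1 F2].
  unfold frac_part in *.
  set (u := (x - theta) / D) in *. set (k := IZR (Int_part u)) in *.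
  rewrite Hu. set (r := u - k) in *. replace u with (k + r) by (unfold r; ring).
  assert (0 < D * (1 - eta)) by nra. assert (0 < D * eta) by nra.
  unfold Rmin; destruct (Rle_dec _ _).
  - replace (D * (eta * k + r) - eta * ((k + r) * D)) with (D * (1 - eta) * r) by ring.
    split; nra.
  - replace (D * (eta * k + eta) - eta * ((k + r) * D)) with (D * eta * (1 - r)) by ring.
    split; nra.
Qed.

Section SignalIntegral.
Variables (c : R) (g : R -> R).
Hypothesis Hg : forall s, g s = c * signal eta D theta s.

Lemma integral_green_phase (k : Z) (a b : R) (pr : Riemann_integrable g a b) :
  theta + IZR k * D <= a <= b -> b <= theta + IZR k * D + eta * D ->
  RiemannInt pr = c * (green_time eta D theta b - green_time eta D theta a).
Proof.
  intros Ha Hb. assert (0 < eta * D) by nra. assert (eta * D < D) by nra.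
  rewrite (RiemannInt_const_open g a b c pr); [| lra |].
  - rewrite (green_time_on_cycle a k), (green_time_on_cycle b k) by lra.
    unfold Rmin; destruct (Rle_dec _ _); destruct (Rle_dec _ _); nra.
  - intros x Hx. rewrite Hg, (signal_on_cycle x k) by nra.
    destruct (Rlt_dec _ _); [ring | lra].
Qed.

Lemma integral_red_phase (k : Z) (a b : R) (pr : Riemann_integrable g a b) :
  theta + IZR k * D + eta * D <= a <= b -> b <= theta + (IZR k + 1) * D ->
  RiemannInt pr = c * (green_time eta D theta b - green_time eta D theta a).
Proof.
  intros Ha Hb. assert (0 < eta * D) by nra.
  rewrite (RiemannInt_const_open g a b 0 pr); [| lra |].
  - rewrite (green_time_on_cycle a k), (green_time_on_cycle b k) by lra.
    rewrite !Rmin_right by lra; ring.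
  - intros x Hx. rewrite Hg, (signal_on_cycle x k) by nra.
    destruct (Rlt_dec _ _); [lra | ring].
Qed.

Lemma integral_one_cycle (k : Z) (a b : R) (pr : Riemann_integrable g a b) :
  theta + IZR k * D <= a <= b -> b <= theta + (IZR k + 1) * D ->
  RiemannInt pr = c * (green_time eta D theta b - green_time eta D theta a).
Proof.
  intros Ha Hb. set (m := theta + IZR k * D + eta * D).
  destruct (Rle_dec b m) as [Hbm | Hbm].
  { apply (integral_green_phase k); unfold m in *; lra. }
  destruct (Rle_dec m a) as [Hma | Hma].
  { apply (integral_red_phase k); unfold m in *; lra. }
  assert (Hm : a <= m <= b) by lra.
  rewrite <- (RiemannInt_P26 (RiemannInt_P22 pr Hm) (RiemannInt_P23 pr Hm) pr).
  rewrite (integral_green_phase k a m), (integral_red_phase k m b) by (unfold m in *; nra).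
  ring.
Qed.

Lemma integral_n_cycles (n : nat) : forall a b (pr : Riemann_integrable g a b),
  a <= b ->
  (Int_part ((b - theta) / D) - Int_part ((a - theta) / D) = Z.of_nat n)%Z ->
  RiemannInt pr = c * (green_time eta D theta b - green_time eta D theta a).
Proof.
  induction n as [| n IH]; intros a b pr Hab Hn;
    pose proof (cycle_index_bounds a) as Ha; pose proof (cycle_index_bounds b) as Hb;
    set (k := Int_part ((a - theta) / D)) in *.
  - assert (Hkb : Int_part ((b - theta) / D) = k) by lia.
    rewrite Hkb in Hb. apply (integral_one_cycle k); lra.
  - assert (Hkb : (k + 1 <= Int_part ((b - theta) / D))%Z) by lia.
    apply IZR_le in Hkb. rewrite plus_IZR in Hkb.
    set (p := theta + (IZR k + 1) * D).
    assert (Hp : a <= p <= b) by (unfold p; nra).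
    assert (Hkp : Int_part ((p - theta) / D) = (k + 1)%Z).
    { apply cycle_index_eq. rewrite plus_IZR. unfold p. nra. }
    rewrite <- (RiemannInt_P26 (RiemannInt_P22 pr Hp) (RiemannInt_P23 pr Hp) pr).
    rewrite (integral_one_cycle k a p) by (unfold p; lra).
    rewrite (IH p b) by (first [lra | rewrite Hkp; lia]).
    ring.
Qed.

Lemma integral_signal (a b : R) (pr : Riemann_integrable g a b) : a <= b ->
  RiemannInt pr = c * (green_time eta D theta b - green_time eta D theta a).
Proof.
  intros Hab.
  assert (Hle : (Int_part ((a - theta) / D) <= Int_part ((b - theta) / D))%Z).
  { pose proof (cycle_index_bounds a). pose proof (cycle_index_bounds b).
    assert (Hlt : IZR (Int_part ((a - theta) / D)) < IZR (Int_part ((b - theta) / D) + 1))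
      by (rewrite plus_IZR; nra).
    apply lt_IZR in Hlt. lia. }
  apply (integral_n_cycles (Z.to_nat (Int_part ((b - theta) / D) - Int_part ((a - theta) / D))));
    [assumption | rewrite Z2Nat.id; lia].
Qed.

Lemma signal_averaging_error (h : R -> R) (a b : R)
    (pr : Riemann_integrable g a b) (pr0 : Riemann_integrable h a b) :
  0 <= c -> a <= b -> (forall s, h s = eta * c) ->
  Rabs (RiemannInt pr - RiemannInt pr0) <= eta * (1 - eta) * D * c.
Proof.
  intros Hc Hab Hh.
  rewrite (integral_signal a b pr Hab),
    (RiemannInt_const_open h a b (eta * c) pr0 Hab (fun s _ => Hh s)).
  pose proof (green_time_deviation b). pose proof (green_time_deviation a).
  set (A := green_time eta D theta b - eta * (b - theta)) in *.
  set (B := green_time eta D theta a - eta * (a - theta)) in *.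
  replace (c * (green_time eta D theta b - green_time eta D theta a) - eta * c * (b - a))
    with (c * (A - B)) by (unfold A, B; ring).
  apply Rabs_le. split; nra.
Qed.

End SignalIntegral.
End SignalCycles.

(* Monotonicity of the Lax-Hopf formula in the downstream datum, up to a
   nonnegative shift K: every candidate value for N2 has a counterpart for N1
   at most K larger (the same value for initial and upstream data). *)
Lemma LH_solution_shift (fstar : R -> R) (v w a b T K : R)
    (Nini Nup D1 D2 : R -> R) (N1 N2 : R -> R -> R) :
  0 <= K -> (forall s, 0 <= s <= T -> D1 s <= D2 s + K) ->
  LH_solution fstar v w a b T Nini Nup D1 N1 ->
  LH_solution fstar v w a b T Nini Nup D2 N2 ->
  forall t x, 0 <= t <= T -> a <= x <= b -> N1 t x <= N2 t x + K.
Proof.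
  intros HK HD H1 H2 t x Ht Hx.
  destruct (H1 t x Ht Hx) as [N1_lower _]. destruct (H2 t x Ht Hx) as [_ N2_greatest].
  enough (N1 t x - K <= N2 t x) by lra.
  apply N2_greatest. intros y [u [tau [Hu [Htau Hy]]]]. cbv zeta in Hy.
  destruct Hy as [Hini | [Hup | [Hz [Hs Hy]]]].
  - enough (N1 t x <= y) by lra.
    apply N1_lower; exists u, tau; split; [| split]; auto; left; exact Hini.
  - enough (N1 t x <= y) by lra.
    apply N1_lower; exists u, tau; split; [| split]; auto; right; left; exact Hup.
  - enough (N1 t x <= D1 (t - tau) + tau * fstar u) by (pose proof (HD (t - tau)); lra).
    apply N1_lower; exists u, tau; split; [| split]; auto; right; right; auto.
Qed.

Lemma LH_solution_stable (fstar : R -> R) (v w a b T K : R)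
    (Nini Nup D1 D2 : R -> R) (N1 N2 : R -> R -> R) :
  (forall s, 0 <= s <= T -> Rabs (D1 s - D2 s) <= K) ->
  LH_solution fstar v w a b T Nini Nup D1 N1 ->
  LH_solution fstar v w a b T Nini Nup D2 N2 ->
  forall t x, 0 <= t <= T -> a <= x <= b -> Rabs (N1 t x - N2 t x) <= K.
Proof.
  intros HD H1 H2 t x Ht Hx.
  assert (HK : 0 <= K) by (eapply Rle_trans; [apply Rabs_pos | exact (HD t Ht)]).
  assert (HD' : forall s, 0 <= s <= T -> D1 s - D2 s <= K /\ - K <= D1 s - D2 s)
    by (intros s Hs; pose proof (HD s Hs) as Habs;
        pose proof (Rle_abs (D1 s - D2 s)); pose proof (Rle_abs (D2 s - D1 s));
        rewrite (Rabs_minus_sym (D2 s)) in *; lra).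
  pose proof (LH_solution_shift fstar v w a b T K Nini Nup D1 D2 N1 N2) as L12.
  pose proof (LH_solution_shift fstar v w a b T K Nini Nup D2 D1 N2 N1) as L21.
  apply Rabs_le; split.
  - enough (N2 t x <= N1 t x + K) by lra.
    apply L21; auto; intros s Hs; pose proof (HD' s Hs); lra.
  - enough (N1 t x <= N2 t x + K) by lra.
    apply L12; auto; intros s Hs; pose proof (HD' s Hs); lra.
Qed.

Lemma eta_one_minus_eta_le (eta : R) : eta * (1 - eta) <= / 4.
Proof. pose proof (pow2_ge_0 (eta - / 2)). nra. Qed.

Theorem theorem4p3
  (f : R -> R) (rhoj Cf v w : R) (fstar : R -> R)
  (a1 b1 T C1 C3 eta1 DeltaA theta : R)
  (S3 Nini Nup NdownD Ndown0 : R -> R) (ND N0 : R -> R -> R) :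
  assumption_F f rhoj Cf v w ->
  is_conjugate f rhoj v w fstar ->
  a1 < b1 -> 0 < T ->
  0 < C1 -> 0 < C3 -> 0 < eta1 < 1 -> 0 < DeltaA ->
  (forall t, S3 t = C3) ->
  (forall t, 0 <= t <= T ->
     exists pr : Riemann_integrable
                   (fun s => Rmin C1 (S3 s) * signal eta1 DeltaA theta s) 0 t,
       NdownD t = RiemannInt pr) ->
  (forall t, 0 <= t <= T ->
     exists pr : Riemann_integrable (fun s => eta1 * Rmin C1 (S3 s)) 0 t,
       Ndown0 t = RiemannInt pr) ->
  LH_solution fstar v w a1 b1 T Nini Nup NdownD ND ->
  LH_solution fstar v w a1 b1 T Nini Nup Ndown0 N0 ->
  forall t x, 0 <= t <= T -> a1 <= x <= b1 ->
    Rabs (ND t x - N0 t x) <= eta1 * (1 - eta1) * DeltaA * Rmin C1 C3 /\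
    eta1 * (1 - eta1) * DeltaA * Rmin C1 C3 <= / 4 * DeltaA * Rmin C1 C3.
Proof.
  intros _ _ _ _ HC1 HC3 Heta HD HS HNdD HNd0 HLD HL0 t x Ht Hx.
  assert (Hc : 0 < Rmin C1 C3) by (apply Rmin_glb_lt; assumption).
  assert (Hdata : forall s, 0 <= s <= T ->
            Rabs (NdownD s - Ndown0 s) <= eta1 * (1 - eta1) * DeltaA * Rmin C1 C3).
  { intros s Hs. destruct (HNdD s Hs) as [pr EqD]. destruct (HNd0 s Hs) as [pr0 Eq0].
    rewrite EqD, Eq0.
    apply (signal_averaging_error eta1 DeltaA theta HD Heta (Rmin C1 C3)); try lra.
    - intros r; rewrite HS; reflexivity.
    - intros r; rewrite HS; reflexivity. }
  split.
  - exact (LH_solution_stable _ _ _ _ _ _ _ _ _ _ _ _ _ Hdata HLD HL0 t x Ht Hx).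
  - pose proof (eta_one_minus_eta_le eta1).
    assert (0 < DeltaA * Rmin C1 C3) by (apply Rmult_lt_0_compat; assumption).
    nra.
Qed.
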